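(* Let $\sigma$ be the morphism on $\{a,b,c\}$ given by $\sigma(a)=acaba$, $\sigma(b)=bac$, $\sigma(c)=cab$. Then the infinite fixed point of $\sigma$ beginning with $a$ is $4$-automatic, and hence $2$-automatic.
   Context: For an integer $q\ge 2$, a sequence is $q$-automatic if it is the image under a letter-to-letter map of a fixed point of a morphism all of whose letter-images have length $q$. *)

From mathcomp Require Import all_boot.
Set Implicit Arguments. Unset Strict Implicit. Unset Printing Implicit Defensive.

Inductive letter := La | Lb | Lc.

Definition sigma (x : letter) : seq letter :=
  match x with
  | La => [:: La; Lc; La; Lb; La]
  | Lb => [:: Lb; La; Lc]
  | Lc => [:: Lc; La; Lb]
  end.

Definition sigma_word (s : seq letter) : seq letter := flatten (map sigma s).

(* Since sigma(a) begins with a, sigma^n(a) is a prefix of sigma^(n+1)(a),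
   and |sigma^n(a)| >= n+1, so letter i is read off sigma^(i+1)(a). *)
Definition sigma_fixpoint (i : nat) : letter :=
  nth La (iter i.+1 sigma_word [:: La]) i.

(* u : nat -> B is a fixed point of the q-uniform morphism tau
   (tau(b) = tnth (tau b) 0 ... tnth (tau b) (q-1)): tau(u) = u, i.e.
   the block of positions q*n .. q*n+q-1 of u is tau(u n). *)
Definition is_uniform_fixpoint (q : nat) (B : Type) (tau : B -> q.-tuple B)
  (u : nat -> B) : Prop :=
  forall (n : nat) (j : 'I_q), u (q * n + j) = tnth (tau (u n)) j.

Definition automatic (q : nat) (A : Type) (w : nat -> A) : Prop :=
  exists (B : finType) (tau : B -> q.-tuple B) (u : nat -> B) (f : B -> A),
    is_uniform_fixpoint tau u /\ (forall n, w n = f (u n)).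

From mathcomp Require Import all_boot.
From HB Require Import structures.
From mathcomp Require Import zify.

(* Let tau4 be the 4-uniform morphism a -> acab, b -> abac,
   c -> acab and t its fixed point starting with a.  Every image under tau4
   has the shape a?a?, with ? in {b,c}; hence t has a exactly at its even
   positions.  For x in {b,c} one checks sigma(a)sigma(x) = tau4(a)tau4(x)
   (acaba.bac = acab.abac, acaba.cab = acab.acab), so sigma and tau4 agree on
   even-length prefixes of t, and sigma maps the prefix of t of length 2k+1
   to its prefix of length 8k+5.  By induction every iterate sigma^m(a) is a
   prefix of t longer than m, so the fixed point of sigma is t, which is
   4-automatic by construction.  Finally, q^2-automatic sequences are
   q-automatic: a fixed point of a q^2-uniform morphism is recovered from a
   q-uniform one on the alphabet (parent letter, last base-q digit, letter). *)

Set Implicit Arguments.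
Unset Strict Implicit.
Unset Printing Implicit Defensive.

Section Digits.
Variables (q : nat) (q_gt0 : 0 < q).

Definition digit (n : nat) : 'I_q := Ordinal (ltn_pmod n q_gt0).

Lemma remainder_block (n : nat) (j : 'I_q) : (q * n + j) %% q = j.
Proof. by rewrite mulnC modnMDl modn_small. Qed.

Lemma digit_block (n : nat) (j : 'I_q) : digit (q * n + j) = j.
Proof. by apply: val_inj; rewrite /= remainder_block. Qed.

Lemma quotient_block (n : nat) (j : 'I_q) : (q * n + j) %/ q = n.
Proof. by rewrite mulnC divnMDl // divn_small ?addn0. Qed.

End Digits.

Lemma take_mkseq (A : Type) (f : nat -> A) (m n : nat) :
  m <= n -> take m (mkseq f n) = mkseq f m.
Proof. by move=> le_mn; rewrite /mkseq -map_take take_iota (minn_idPl le_mn). Qed.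

Section UniformMorphisms.
Variables (B : Type) (q : nat) (tau : B -> q.-tuple B).

Definition uniform_word (s : seq B) : seq B := flatten [seq tval (tau x) | x <- s].

Lemma uniform_word_cat (s1 s2 : seq B) :
  uniform_word (s1 ++ s2) = uniform_word s1 ++ uniform_word s2.
Proof. by rewrite /uniform_word map_cat flatten_cat. Qed.

Lemma uniform_word_prefix (u : nat -> B) (n : nat) :
  is_uniform_fixpoint tau u -> uniform_word (mkseq u n) = mkseq u (q * n).
Proof.
move=> fix_u; elim: n => [|n IH]; first by rewrite muln0.
rewrite mkseqS -cats1 uniform_word_cat IH /uniform_word /= cats0.
rewrite mulnS addnC /mkseq iotaD map_cat add0n.
congr (_ ++ _); apply: (@eq_from_nth _ (u n)); first by rewrite size_map size_iota size_tuple.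
move=> j; rewrite size_tuple => lt_jq.
by rewrite (nth_map 0) ?size_iota // nth_iota // (fix_u n (Ordinal lt_jq)) (tnth_nth (u n)).
Qed.
End UniformMorphisms.

(* The
   recursion decreases n, so it is computed with fuel n. *)
Section FixpointConstruction.
Variables (B : Type) (q : nat) (tau : B -> q.-tuple B) (x0 : B).

Fixpoint fixpoint_fuel (fuel n : nat) : B :=
  if fuel is fuel'.+1 then
    if n == 0 then x0 else nth x0 (tau (fixpoint_fuel fuel' (n %/ q))) (n %% q)
  else x0.

Definition uniform_fixpoint (n : nat) : B := fixpoint_fuel n n.

Hypothesis q_gt1 : 1 < q.
Hypothesis tau_x0 : nth x0 (tau x0) 0 = x0.

Lemma fixpoint_fuel_stable (f g n : nat) :
  n <= f -> n <= g -> fixpoint_fuel f n = fixpoint_fuel g n.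
Proof.
elim: f g n => [|f IH] [|g] n //=.
- by rewrite leqn0 => /eqP->.
- by move=> _; rewrite leqn0 => /eqP->.
case: eqP => // /eqP n_neq0 n_le_f n_le_g.
have lt_quot_n : n %/ q < n by rewrite ltn_Pdiv ?lt0n // ltnW.
by rewrite (IH g) //; lia.
Qed.

Lemma uniform_fixpoint_digit (n : nat) :
  uniform_fixpoint n = nth x0 (tau (uniform_fixpoint (n %/ q))) (n %% q).
Proof.
case: n => [|n]; first by rewrite div0n mod0n.
rewrite /uniform_fixpoint /=; congr (nth _ (tau _) _).
apply: fixpoint_fuel_stable => //.
by rewrite -ltnS ltn_Pdiv // ltnW.
Qed.

Lemma uniform_fixpointP : is_uniform_fixpoint tau uniform_fixpoint.
Proof.
move=> n j; have q_gt0 : 0 < q by apply: ltnW.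
by rewrite uniform_fixpoint_digit (quotient_block q_gt0) remainder_block (tnth_nth x0).
Qed.

End FixpointConstruction.

Section Squaring.
Variables (q : nat) (q_gt0 : 0 < q).

Lemma block_index_subproof (r j : 'I_q) : q * r + j < q * q.
Proof. have := ltn_ord r; have := ltn_ord j; nia. Qed.

Definition block_index (r j : 'I_q) : 'I_(q * q) := Ordinal (block_index_subproof r j).

Section SplitMorphism.
Variables (B : finType) (tau : B -> (q * q).-tuple B).

(* A state (p, r, y) records the current letter y, its parent letter p and
   the last digit r of its position; since position q*n+j of the (q*q)-fixed
   point lies in block r = n %% q of tau(p), the j-th child of (p, r, y) is
   (y, j, letter q*r+j of tau(p)). *)
Definition split_morphism (x : B * 'I_q * B) : q.-tuple (B * 'I_q * B) :=
  let: (p, r, y) := x in [tuple (y, j, tnth (tau p) (block_index r j)) | j < q].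

Definition split_sequence (u : nat -> B) (n : nat) : B * 'I_q * B :=
  (u (n %/ q), digit q_gt0 n, u n).

Lemma split_sequence_fixpoint (u : nat -> B) :
  is_uniform_fixpoint tau u -> is_uniform_fixpoint split_morphism (split_sequence u).
Proof.
move=> fix_u n j; rewrite /split_sequence /split_morphism tnth_mktuple.
rewrite (quotient_block q_gt0) (digit_block q_gt0); congr (_, _, _).
rewrite -fix_u /=; congr u.
by rewrite {1}(divn_eq n q) mulnDr addnA [_ %/ q * q]mulnC mulnA.
Qed.

End SplitMorphism.

Lemma automatic_from_square (A : Type) (w : nat -> A) :
  automatic (q * q) w -> automatic q w.
Proof.
case=> B' [tau' [u [f [fix_u w_eq]]]].
exists (B' * 'I_q * B')%type, (split_morphism tau'), (split_sequence u), (fun x => f x.2).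
by split; [exact: split_sequence_fixpoint | exact: w_eq].
Qed.
End Squaring.

Definition letter_to_ord (x : letter) : 'I_3 :=
  match x with La => inord 0 | Lb => inord 1 | Lc => inord 2 end.

Definition ord_to_letter (i : 'I_3) : letter :=
  match val i with 0 => La | 1 => Lb | _ => Lc end.

Lemma letter_to_ordK : cancel letter_to_ord ord_to_letter.
Proof. by case; rewrite /ord_to_letter /= inordK. Qed.

HB.instance Definition _ := Finite.copy letter (can_type letter_to_ordK).

Definition tau4 (x : letter) : 4.-tuple letter :=
  match x with
  | La => [tuple La; Lc; La; Lb]
  | Lb => [tuple La; Lb; La; Lc]
  | Lc => [tuple La; Lc; La; Lb]
  end.

Definition tau4_fixpoint : nat -> letter := uniform_fixpoint tau4 La.

Lemma tau4_fixpointP : is_uniform_fixpoint tau4 tau4_fixpoint.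
Proof. exact: uniform_fixpointP. Qed.

(* Every tau4-image has the shape a?a? with ? <> a, so t is a exactly at
   even positions. *)
Lemma tau4_fixpoint_parity (n : nat) : tau4_fixpoint n = La <-> ~~ odd n.
Proof.
rewrite /tau4_fixpoint uniform_fixpoint_digit // -(@odd_mod n 4) //.
case: (uniform_fixpoint _ _ _);
  case: (n %% 4) (ltn_pmod n (isT : 0 < 4)) => [|[|[|[|m]]]] // _; split.
Qed.

Lemma sigma_tau4_pair (x : letter) : x <> La -> sigma La ++ sigma x = tau4 La ++ tau4 x.
Proof. by case: x. Qed.

Lemma sigma_word_cat (s1 s2 : seq letter) :
  sigma_word (s1 ++ s2) = sigma_word s1 ++ sigma_word s2.
Proof. by rewrite /sigma_word map_cat flatten_cat. Qed.

(* On even prefixes of t (words in (a{b,c})* ) sigma acts as tau4. *)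
Lemma sigma_word_even_prefix (k : nat) :
  sigma_word (mkseq tau4_fixpoint (2 * k)) = mkseq tau4_fixpoint (4 * (2 * k)).
Proof.
rewrite -(uniform_word_prefix _ tau4_fixpointP); elim: k => [|k IH] //.
have -> : 2 * k.+1 = (2 * k).+2 by rewrite mulnS.
rewrite !mkseqS -!cats1 -catA sigma_word_cat uniform_word_cat IH; congr (_ ++ _).
have -> : tau4_fixpoint (2 * k) = La by apply/tau4_fixpoint_parity; rewrite mul2n odd_double.
have : tau4_fixpoint (2 * k).+1 <> La by move/tau4_fixpoint_parity; rewrite /= mul2n odd_double.
by rewrite /sigma_word /uniform_word /= !cats0 => /sigma_tau4_pair.
Qed.

(* sigma maps the prefix of length 2k+1 to the prefix of length 8k+5: the
   image of the last letter a is acaba, the first five letters of the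
   image of the next pair. *)
Lemma sigma_word_odd_prefix (k : nat) :
  sigma_word (mkseq tau4_fixpoint (2 * k).+1) = mkseq tau4_fixpoint (2 * (4 * k + 2)).+1.
Proof.
have even_a : tau4_fixpoint (2 * k) = La by apply/tau4_fixpoint_parity; rewrite mul2n odd_double.
rewrite -[RHS](@take_mkseq _ _ _ (4 * (2 * k.+1))); last by lia.
rewrite -sigma_word_even_prefix (_ : 2 * k.+1 = (2 * k).+2) ?mulnS // 3!mkseqS.
rewrite -!cats1 -catA !sigma_word_cat catA take_size_cat //.
by rewrite size_cat sigma_word_even_prefix size_mkseq even_a /=; lia.
Qed.

Lemma sigma_iterates_are_prefixes (m : nat) :
  exists h, m < (2 * h).+1 /\ iter m sigma_word [:: La] = mkseq tau4_fixpoint (2 * h).+1.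
Proof.
elim: m => [|m [h [lt_mh iter_eq]]].
  exists 0; split=> //=; congr [:: _]; symmetry; exact/tau4_fixpoint_parity.
by exists (4 * h + 2); rewrite iterS iter_eq sigma_word_odd_prefix; split=> //; lia.
Qed.

Lemma sigma_fixpoint_tau4 (i : nat) : sigma_fixpoint i = tau4_fixpoint i.
Proof.
have [h [lt_ih iter_eq]] := sigma_iterates_are_prefixes i.+1.
by rewrite /sigma_fixpoint iter_eq nth_mkseq //; apply: ltn_trans lt_ih.
Qed.

Theorem mainTheorem8 : automatic 4 sigma_fixpoint /\ automatic 2 sigma_fixpoint.
Proof.
have four_automatic : automatic 4 sigma_fixpoint.
  exists letter, tau4, tau4_fixpoint, id; split; first exact: tau4_fixpointP.
  exact: sigma_fixpoint_tau4.
by split; last exact: (@automatic_from_square 2).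
Qed.
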